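(* Let $q$ be odd and $u\in\mathbf{SL}_n(q)$ unipotent. Assume either (a) $n=4$ and $u$ has type $(2,2)$, or (b) $n=3$ and $u$ has type $(2,1)$. Then the conjugacy class $\mathcal{O}_u$ in $\mathbf{SL}_n(q)$ is of type D.
   Context: Unipotent type = sizes of Jordan blocks. Conjugacy classes are racks with $x\triangleright y=xyx^{-1}$. A subrack $Y$ is decomposable if $Y=R\sqcup S$ with nonempty subracks $R,S$, $Y\triangleright R=R$, $Y\triangleright S=S$. Type D: a decomposable subrack $R\sqcup S$ with $r\in R,s\in S$ and $r\triangleright(s\triangleright(r\triangleright s))\neq s$. *)

From HB Require Import structures.
From mathcomp Require Import all_boot all_order all_algebra all_fingroup.
Set Implicit Arguments. Unset Strict Implicit. Unset Printing Implicit Defensive.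
Import GRing.Theory.

Local Open Scope group_scope.

Definition rtr (gT : finGroupType) (x y : gT) : gT := x * y * x^-1.

Definition rtr_set (gT : finGroupType) (Y R : {set gT}) : {set gT} :=
  [set rtr y r | y in Y, r in R].

Definition subrack (gT : finGroupType) (Y : {set gT}) : Prop :=
  forall x y, x \in Y -> y \in Y -> rtr x y \in Y.

Definition typeD (gT : finGroupType) (O : {set gT}) : Prop :=
  exists R S : {set gT},
    R != set0 /\ S != set0 /\ [disjoint R & S] /\ R :|: S \subset O /\
    subrack (R :|: S) /\ subrack R /\ subrack S /\
    rtr_set (R :|: S) R = R /\ rtr_set (R :|: S) S = S /\
    exists r s, r \in R /\ s \in S /\ rtr r (rtr s (rtr r s)) != s.

Definition SL (n : nat) (F : finFieldType) : {set {'GL_n[F]}} :=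
  [set g : {'GL_n[F]} | (\det (GLval g) == 1)%R].

Local Open Scope ring_scope.

Definition block_ends (lam : seq nat) : seq nat :=
  [seq sumn (take k lam) | k <- iota 1 (size lam)].

(* The unipotent Jordan matrix of type lam (blocks in the order of lam):
   1 on the diagonal, 1 at (i, i+1) unless i+1 starts a new block. *)
Definition unip_jordan (F : fieldType) (m : nat) (lam : seq nat) : 'M[F]_m :=
  \matrix_(i < m, j < m)
    (if i == j then 1
     else if (nat_of_ord j == (nat_of_ord i).+1) && (nat_of_ord j \notin block_ends lam)
          then 1 else 0).

Definition unip_type (n : nat) (F : finFieldType) (u : {'GL_n[F]}) (lam : seq nat) : Prop :=
  [/\ all (fun k => 0 < k)%N lam, sumn lam = n &
      exists g : {'GL_n[F]}, GLval (g * u * g^-1)%g = unip_jordan F n.-1.+1 lam].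

From HB Require Import structures.
From mathcomp Require Import all_boot all_order all_algebra all_fingroup all_field.
From mathcomp Require Import zify.

(* Let C be the SL_n(q)-class of u.  If a subgroup K carries a
   function f that is invariant under K-conjugation, and r, s are elements of
   C lying in K with f r <> f s, then the two fibres
     R = {x in C :&: K | f x = f r},   S = {x in C :&: K | f x = f s}
   form a decomposable subrack of C, since conjugating by an element of
   C :&: K preserves both K and f.  Type D then only asks for the "braid"
   inequality r |> (s |> (r |> s)) <> s, i.e. r s r s <> s r s r.
   We take for K the upper unitriangular group, for f the (0,1) entry (a
   homomorphism on K), for r the Jordan form J of u and for s = P^-1 J P with
   P the even permutation matrix of the 3-cycle (0 1 2).  For the types (2,2)
   and (2,1), J and s are unitriangular with (0,1) entries 1 and 0, and the
   (0,2) entries of r s r s and s r s r are 3 and 1; these facts about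
   0/1 matrices are checked by computing with natural-number matrices, and
   3 <> 1 because q is odd.  Everything is transported back to u by the
   conjugation relating u to J. *)

Set Implicit Arguments. Unset Strict Implicit. Unset Printing Implicit Defensive.
Import GRing.Theory.
Local Open Scope group_scope.

Section GroupRack.
Variable gT : finGroupType.
Implicit Types a b g x y : gT.

Lemma rtrE x y : rtr x y = y ^ x^-1.
Proof. by rewrite /rtr /conjg invgK mulgA. Qed.

Lemma rtrJ x y g : rtr (x ^ g) (y ^ g) = rtr x y ^ g.
Proof. by rewrite /rtr !conjMg conjVg. Qed.

Lemma rtr_braid_ne a b :
  a * b * a * b != b * a * b * a -> rtr a (rtr b (rtr a b)) != b.
Proof.
apply: contra => /eqP H; apply/eqP.
have -> : a * b * a * b = rtr a (rtr b (rtr a b)) * (a * b * a).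
  by rewrite /rtr !mulgA !mulgKV.
by rewrite H !mulgA.
Qed.

End GroupRack.

Section SeparatingInvariant.
Variables (gT : finGroupType) (G K : {group gT}) (T : eqType) (f : gT -> T).
Hypothesis fJ : {in K &, forall x y, f (x ^ y) = f x}.
Variable r : gT.
Hypotheses (rG : r \in G) (rK : r \in K).

Let fiber a := [set x in r ^: G | (x \in K) && (f x == f a)].

Lemma fiberP a x : reflect [/\ x \in r ^: G, x \in K & f x = f a] (x \in fiber a).
Proof. by rewrite inE; apply: (iffP and3P) => -[? ? /eqP]. Qed.

Lemma fiberJ a x y : x \in G -> x \in K -> y \in fiber a -> y ^ x \in fiber a.
Proof.
move=> xG xK /fiberP[/imsetP[z zG ->] yK fy]; apply/fiberP; split.
- by apply/imsetP; exists (z * x); rewrite ?groupM ?conjgM.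
- by rewrite groupJ.
- by rewrite fJ.
Qed.

Lemma fiber_rtr a x y : x \in r ^: G -> x \in K -> y \in fiber a -> rtr x y \in fiber a.
Proof.
move=> /imsetP[z zG ->] xK ya; rewrite rtrE.
by apply: fiberJ; rewrite ?groupV // groupJ.
Qed.

(* Both fibres lie in the class of r and in K, so they act on every fibre. *)
Lemma fiberU_rtr s a x y :
  x \in fiber r :|: fiber s -> y \in fiber a -> rtr x y \in fiber a.
Proof. by case/setUP => /fiberP[xO xK _]; apply: fiber_rtr. Qed.

Lemma rtr_set_fiber s a : rtr_set (fiber r :|: fiber s) (fiber a) = fiber a.
Proof.
apply/setP => y; apply/imset2P/idP => [[x z xRS za ->]|ya].
  exact: fiberU_rtr xRS za.
exists r (y ^ r); last by rewrite /rtr /conjg !mulgA mulgV mul1g mulgK.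
- by rewrite inE; apply/orP; left; apply/fiberP; rewrite class_refl.
- exact: fiberJ.
Qed.

Lemma typeD_of_separating_invariant s :
  s \in K -> s \in r ^: G -> f r != f s ->
  rtr r (rtr s (rtr r s)) != s -> typeD (r ^: G).
Proof.
move=> sK sO frs braid.
have rR : r \in fiber r by apply/fiberP; rewrite class_refl.
have sS : s \in fiber s by apply/fiberP.
exists (fiber r), (fiber s).
split; [|split; [|split; [|split; [|split; [|split; [|split; [|split]]]]]]].
- by apply/set0Pn; exists r.
- by apply/set0Pn; exists s.
- apply/pred0P => x /=; apply/negbTE/andP => -[/fiberP[_ _ fxr] /fiberP[_ _ fxs]].
  by rewrite -fxr fxs eqxx in frs.
- by apply/subsetP => x /setUP[] /fiberP[].
- by move=> x y xRS /setUP[] ya; apply/setUP; [left|right]; apply: fiberU_rtr xRS ya.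
- by move=> x y xR; apply: (fiberU_rtr (s := s)); rewrite inE xR.
- by move=> x y xS; apply: (fiberU_rtr (s := s)); rewrite inE xS orbT.
- exact: rtr_set_fiber.
split; first exact: rtr_set_fiber.
by exists r, s; split; [|split].
Qed.

End SeparatingInvariant.

Lemma typeD_of_conjugate_witness (gT : finGroupType) (G K : {group gT})
    (T : eqType) (f : gT -> T) (r h g : gT) :
  {in K &, forall x y, f (x ^ y) = f x} ->
  r \in K -> r ^ h \in K -> r ^ g \in G -> h ^ g \in G ->
  f r != f (r ^ h) -> rtr r (rtr (r ^ h) (rtr r (r ^ h))) != r ^ h ->
  typeD ((r ^ g) ^: G).
Proof.
move=> fJ rK sK rG hG frs braid.
apply: (typeD_of_separating_invariant (K := (K :^ g)%G)
         (f := fun x => f (x ^ g^-1)) _ rG _ (s := (r ^ h) ^ g)).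
- by move=> x y; rewrite /= !mem_conjg => xK yK; rewrite conjJg (fJ _ _ xK yK).
- by rewrite /= memJ_conjg.
- by rewrite /= memJ_conjg.
- by apply/imsetP; exists (h ^ g); rewrite // conjJg.
- by rewrite !conjgK.
- by rewrite !rtrJ (inj_eq (@conjg_inj _ g)).
Qed.

Section SpecialLinear.
Variables (n : nat) (F : finFieldType).

Lemma SL_group_set : group_set (SL n F).
Proof.
apply/group_setP; split; first by rewrite inE GL_1E det1.
by move=> x y; rewrite !inE GL_MxE det_mulmx => /eqP -> /eqP ->; rewrite mulr1.
Qed.
Canonical SL_group := Group SL_group_set.

Lemma SL_conj (h g : {'GL_n[F]}) : h \in SL n F -> h ^ g \in SL n F.
Proof.
rewrite !inE conjgE !GL_MxE !det_mulmx GL_VxE det_inv => /eqP ->.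
by rewrite mul1r mulVf // GL_det.
Qed.

Lemma GL_conjE (x h : {'GL_n[F]}) :
  GLval (x ^ h) = (invmx (GLval h) *m GLval x *m GLval h)%R.
Proof. by rewrite conjgE !GL_MxE GL_VxE mulmxA. Qed.

Lemma GL_conj_intertwine (x h : {'GL_n[F]}) (S : 'M[F]_n.-1.+1) :
  (GLval h *m S = GLval x *m GLval h)%R -> GLval (x ^ h) = S.
Proof.
move=> hS; rewrite GL_conjE -mulmxA -hS mulmxA mulVmx ?mul1mx //.
exact: GL_unitmx.
Qed.

End SpecialLinear.

Section Unitriangular.
Local Open Scope ring_scope.
Variables (F : fieldType) (m : nat).

Definition unitri (A : 'M[F]_m) : bool :=
  [forall i : 'I_m, forall j : 'I_m, (j <= i)%N ==> (A i j == (i == j)%:R)].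

Lemma unitriP (A : 'M[F]_m) :
  reflect (forall i j : 'I_m, (j <= i)%N -> A i j = (i == j)%:R) (unitri A).
Proof.
apply: (iffP forallP) => [H i j ji|H i].
  by move/forallP: (H i) => /(_ j); rewrite ji => /eqP.
by apply/forallP => j; apply/implyP => ji; rewrite H.
Qed.

Lemma unitri_lt (A : 'M[F]_m) (i j : 'I_m) : unitri A -> (j < i)%N -> A i j = 0.
Proof.
move/unitriP => H ji; rewrite (H i j (ltnW ji)).
by case: eqP ji => // ->; rewrite ltnn.
Qed.

Lemma unitri_diag (A : 'M[F]_m) (i : 'I_m) : unitri A -> A i i = 1.
Proof. by move/unitriP => H; rewrite H // eqxx. Qed.

Lemma unitri1 : unitri 1%:M.
Proof. by apply/unitriP => i j _; rewrite mxE. Qed.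

Lemma unitri_mul (A B : 'M[F]_m) : unitri A -> unitri B -> unitri (A *m B).
Proof.
move=> uA uB; apply/unitriP => i j ji; rewrite mxE (bigD1 i) //= big1.
  by rewrite unitri_diag // mul1r addr0; apply: (unitriP _ uB).
move=> l li; case: (ltngtP l i) => [lt|gt|eq].
- by rewrite unitri_lt // mul0r.
- by rewrite (unitri_lt uB) ?mulr0 // (leq_ltn_trans ji gt).
- by rewrite (val_inj eq) eqxx in li.
Qed.

Lemma unitri_superdiag (A B : 'M[F]_m) (i j : 'I_m) :
  unitri A -> unitri B -> j = i.+1 :> nat -> (A *m B) i j = A i j + B i j.
Proof.
move=> uA uB ej; have ij : i != j by apply/eqP => eij; rewrite eij in ej; lia.
rewrite mxE (bigD1 i) //= (bigD1 j) 1?eq_sym //= big1 => [|l /andP[li lj]].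
  by rewrite (unitri_diag _ uA) (unitri_diag _ uB) mul1r mulr1 addr0 addrC.
case: (ltngtP l i) => [lt|gt|eq].
- by rewrite unitri_lt // mul0r.
- have jl : (j < l)%N by move: li lj; rewrite -!val_eqE /=; lia.
  by rewrite (unitri_lt uB jl) mulr0.
- by rewrite (val_inj eq) eqxx in li.
Qed.

End Unitriangular.

Section UnitriangularGroup.
Variables (F : finFieldType) (k : nat).
Local Notation GL := {'GL_k.+1[F]}.

Definition unitriGL : {set GL} := [set x : GL | unitri (GLval x)].

Lemma unitriGL_group_set : group_set unitriGL.
Proof.
apply/group_setP; split; first by rewrite inE GL_1E unitri1.
by move=> x y; rewrite !inE GL_MxE; apply: unitri_mul.
Qed.
Canonical unitriGL_group := Group unitriGL_group_set.

(* A superdiagonal entry is a homomorphism from the unitriangular group to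
   (F, +), hence a class function on that group. *)
Lemma superdiag_conj (i j : 'I_k.+1) : j = i.+1 :> nat ->
  {in unitriGL &, forall x y : GL, GLval (x ^ y) i j = GLval x i j}.
Proof.
move=> ej; pose e (x : GL) := GLval x i j.
have eM : {in unitriGL &, forall x y : GL, e (x * y) = (e x + e y)%R}.
  by move=> x y; rewrite !inE => ux uy; rewrite /e GL_MxE unitri_superdiag.
have e1 : e 1 = 0%R.
  by rewrite /e GL_1E mxE; case: eqP => // eij; rewrite eij in ej; lia.
move=> x y ux uy; have uyV : y^-1 \in unitriGL by rewrite groupV.
have eV : e y^-1 = (- e y)%R.
  by apply/eqP; rewrite -subr_eq0 opprK -eM // mulVg e1.
by rewrite -/(e _) conjgE !eM ?groupM // eV addrC addrK.
Qed.

End UnitriangularGroup.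

Section NatMatrices.
Local Open Scope ring_scope.
(* 0/1-patterns are handled as natural-number matrices i, j |-> a i j, so
   that identities between them can be decided by computation. *)
Variables (F : fieldType) (m : nat).

Definition Mn (a : nat -> nat -> nat) : 'M[F]_m := \matrix_(i, j) (a i j)%:R.

Definition nmul (a b : nat -> nat -> nat) (i j : nat) : nat :=
  sumn [seq a i l * b l j | l <- iota 0 m].

Definition allchk (P : nat -> nat -> bool) : bool :=
  all (fun i => all (P i) (iota 0 m)) (iota 0 m).

Lemma allchkP (P : nat -> nat -> bool) : allchk P -> forall i j : 'I_m, P i j.
Proof.
move=> /allP H i j; have mem_ord (l : 'I_m) : (l : nat) \in iota 0 m.
  by rewrite mem_iota add0n ltn_ord.
exact: (allP (H _ (mem_ord i)) _ (mem_ord j)).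
Qed.

Lemma MnE a (i j : 'I_m) : Mn a i j = (a i j)%:R.
Proof. by rewrite mxE. Qed.

Lemma MnM a b : Mn a *m Mn b = Mn (nmul a b).
Proof.
apply/matrixP => i j; rewrite !mxE /nmul sumnE big_map natr_sum.
rewrite -[m in iota 0 m]subn0 -/(index_iota 0 m) big_mkord.
by apply: eq_bigr => l _; rewrite !mxE natrM.
Qed.

Lemma Mn_eq a b : allchk (fun i j => a i j == b i j) -> Mn a = Mn b.
Proof. by move/allchkP => H; apply/matrixP => i j; rewrite !MnE (eqP (H i j)). Qed.

Definition nat_unitri (a : nat -> nat -> nat) : bool :=
  allchk (fun i j => (j <= i)%N ==> (a i j == (i == j))).

Lemma unitri_Mn a : nat_unitri a -> unitri (Mn a).
Proof.
move/allchkP => H; apply/unitriP => i j ji.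
by move: (H i j); rewrite ji MnE => /eqP ->.
Qed.

End NatMatrices.

Definition jordan_nat (lam : seq nat) (i j : nat) : nat :=
  (i == j) || ((j == i.+1) && (j \notin block_ends lam)).

Lemma unip_jordan_nat (F : fieldType) m lam :
  unip_jordan F m lam = Mn F m (jordan_nat lam).
Proof.
apply/matrixP => i j; rewrite !mxE /jordan_nat.
case: (eqVneq i j) => [->|ne]; first by rewrite !eqxx.
by rewrite val_eqE (negbTE ne) /=; case: (_ && _).
Qed.

Section ThreeCycle.
(* The cycle 0 -> 1 -> 2 -> 0 on the first three indices. *)
Definition cyc3 (i : nat) : nat := nth i [:: 1; 2; 0]%N i.

Variable k : nat.
Definition rot3 : 'S_k.+3 :=
  tperm (Ordinal (isT : 1 < k.+3)) (Ordinal (isT : 2 < k.+3)) *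
  tperm (Ordinal (isT : 0 < k.+3)) (Ordinal (isT : 1 < k.+3)).

Lemma rot3E (i : 'I_k.+3) : rot3 i = cyc3 i :> nat.
Proof.
by rewrite permM !permE; case: i => [[|[|[|i]]] Hi] //=; rewrite /cyc3 nth_default.
Qed.

Lemma rot3_even : ~~ rot3.
Proof. by rewrite odd_permM !odd_tperm. Qed.

Variable F : finFieldType.
Definition rot3GL : {'GL_k.+3[F]} := FinRing.Unit (@unitmx_perm F k.+3 rot3).

Lemma rot3GL_SL : rot3GL \in SL k.+3 F.
Proof. by rewrite inE /= det_perm (negbTE rot3_even) expr0. Qed.

Definition cyc3_nat (i j : nat) : nat := cyc3 i == j.

Lemma rot3GLE : GLval rot3GL = Mn F k.+3 cyc3_nat.
Proof. by apply/matrixP => i j; rewrite !mxE /cyc3_nat -rot3E. Qed.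

End ThreeCycle.

Section OddOrder.
Local Open Scope ring_scope.

Lemma two_neq0 (F : finFieldType) : odd #|F| -> (2%:R : F) != 0.
Proof.
move=> oF; apply/negP => /eqP h2.
have pc : (2 \in [pchar F])%N by apply/andP; split => //; apply/eqP.
have := card_pprimeChar pc => /= hc.
move: oF; rewrite hc oddX /= orbF => /eqP h0.
by move: hc (finNzRing_gt1 F); rewrite h0 => /= ->.
Qed.

End OddOrder.

Section JordanWitness.
Variable m : nat.
Local Notation "a ** b" := (nmul m a b) (at level 40, left associativity).

(* The conjugate P^T J P of the Jordan pattern J by the 3-cycle pattern P. *)
Definition cyc3_conj (lam : seq nat) : nat -> nat -> nat :=
  (fun i j => cyc3_nat j i) ** (jordan_nat lam ** cyc3_nat).

Definition jordan_witness (lam : seq nat) : bool :=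
  let J := jordan_nat lam in let S := cyc3_conj lam in
  [&& allchk m (fun i j => (cyc3_nat ** S) i j == (J ** cyc3_nat) i j),
      nat_unitri m J, nat_unitri m S, J 0 1 == 1, S 0 1 == 0,
      (J ** S ** J ** S) 0 2 == 3 & (S ** J ** S ** J) 0 2 == 1]%N.

End JordanWitness.

Lemma Mn_braid_ne (F : finFieldType) (k : nat) (a b : nat -> nat -> nat)
    (x y : {'GL_k.+3[F]}) :
  odd #|F| -> GLval x = Mn F k.+3 a -> GLval y = Mn F k.+3 b ->
  nmul k.+3 (nmul k.+3 (nmul k.+3 a b) a) b 0 2 = 3%N ->
  nmul k.+3 (nmul k.+3 (nmul k.+3 b a) b) a 0 2 = 1%N ->
  x * y * x * y != y * x * y * x.
Proof.
move=> oF xa yb xyxy yxyx; pose i0 : 'I_k.+3 := ord0; pose i2 : 'I_k.+3 := inord 2.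
apply/eqP => /(congr1 (fun z : {'GL_k.+3[F]} => GLval z i0 i2)).
rewrite !GL_MxE xa yb !MnM !MnE inordK // xyxy yxyx => /eqP.
by rewrite -subr_eq0 -natrB // (negbTE (two_neq0 oF)).
Qed.

Lemma typeD_of_jordan (F : finFieldType) (k : nat) (u g : {'GL_k.+3[F]})
    (lam : seq nat) :
  odd #|F| -> u \in SL k.+3 F ->
  GLval (g * u * g^-1) = unip_jordan F k.+3 lam ->
  jordan_witness k.+3 lam -> typeD (u ^: SL k.+3 F).
Proof.
move=> oF uSL uJ /and5P[PS Jtri Stri J01 /and3P[S01 /eqP JS /eqP SJ]].
set J := g * u * g^-1 in uJ; set h := rot3GL k F.
have uE : u = J ^ g by rewrite /J conjgE !mulgA mulVg mul1g mulgKV.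
have {}uJ : GLval J = Mn F k.+3 (jordan_nat lam) by rewrite uJ unip_jordan_nat.
have sJ : GLval (J ^ h) = Mn F k.+3 (cyc3_conj k.+3 lam).
  by apply: GL_conj_intertwine; rewrite uJ rot3GLE !MnM; apply: Mn_eq.
rewrite uE; apply: (typeD_of_conjugate_witness (K := unitriGL_group F k.+2)
                     (f := fun x => GLval x ord0 (inord 1)) (h := h)).
- by apply: superdiag_conj; rewrite inordK.
- by rewrite inE uJ unitri_Mn.
- by rewrite inE sJ unitri_Mn.
- by rewrite -uE.
- exact/SL_conj/rot3GL_SL.
- by rewrite uJ sJ !MnE inordK // (eqP J01) (eqP S01) oner_eq0.
- exact/rtr_braid_ne/(Mn_braid_ne oF uJ sJ JS SJ).
Qed.

Local Close Scope group_scope.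

Theorem mainTheorem10 (F : finFieldType) (n : nat) (u : {'GL_n[F]}) :
  odd #|F| ->
  u \in SL n F ->
  (n = 4 /\ unip_type u [:: 2; 2]) \/ (n = 3 /\ unip_type u [:: 2; 1]) ->
  typeD (u ^: SL n F)%g.
Proof.
move=> oF uSL [[en [_ _ [g uJ]]] | [en [_ _ [g uJ]]]]; subst n;
  by apply: (typeD_of_jordan oF uSL uJ); vm_compute.
Qed.
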